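(* Let $n\geq 2$ and $\alpha_2,\dots,\alpha_n\in\mathbb{C}$ with $\alpha_2\neq 0$. Then the transposed Poisson algebra $\mathbf{TP}(\alpha_2,\dots,\alpha_n)$ is isomorphic to $\mathbf{TP}(1,0,\dots,0)$, i.e. to $\mu_0^n$ with $e_i\cdot e_j=e_{i+j}$ ($2\leq i+j\leq n$) and $[e_i,e_j]=(j-i)e_{i+j-1}$ ($3\leq i+j\leq n+1$).
   Context: $\mu_0^n$ is the complex commutative associative algebra with basis $\{e_1,\dots,e_n\}$ and $e_i\cdot e_j=e_{i+j}$ for $2\leq i+j\leq n$, other products zero. For $\alpha_2,\dots,\alpha_n\in\mathbb{C}$, $\mathbf{TP}(\alpha_2,\dots,\alpha_n)$ denotes $\mu_0^n$ with its associative product together with the bracket $[e_i,e_j]=(j-i)\sum_{t=i+j-1}^{n}\alpha_{t-i-j+3}e_t$ for $3\leq i+j\leq n+1$, other brackets of basis elements zero. Isomorphisms are linear bijections preserving both operations. *)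

From HB Require Import structures.
From mathcomp Require Import all_boot all_order all_algebra.
From mathcomp Require Import complex.
From mathcomp Require Import Rstruct.
Set Implicit Arguments. Unset Strict Implicit. Unset Printing Implicit Defensive.
Import Order.TTheory GRing.Theory Num.Theory.
Local Open Scope ring_scope.

Notation CC := (complex Rdefinitions.R).

(* Vectors of C^n, the underlying space of mu_0^n; coordinate j : 'I_n
   (0-based) is the coefficient of e_(j+1). *)
Definition ebase (n k : nat) : 'rV[CC]_n := \row_(j < n) ((j.+1 == k)%:R).

Definition bilin (n : nat) (f : nat -> nat -> 'rV[CC]_n) (u v : 'rV[CC]_n)
  : 'rV[CC]_n :=
  \sum_(i < n) \sum_(j < n) (u 0 i * v 0 j) *: f i.+1 j.+1.

Definition dotE (n : nat) (a b : nat) : 'rV[CC]_n :=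
  if (a + b <= n)%N then ebase n (a + b) else 0.

(* TP(alpha_2,...,alpha_n) bracket (only alpha 2 .. alpha n are used):
   [e_a,e_b] = (b-a) sum_(t=a+b-1)^n alpha_(t-a-b+3) e_t  if 3 <= a+b <= n+1. *)
Definition brE (n : nat) (alpha : nat -> CC) (a b : nat) : 'rV[CC]_n :=
  if (3 <= a + b <= n.+1)%N then
    (b%:R - a%:R) *: \sum_((a + b).-1 <= t < n.+1) alpha (t + 3 - (a + b))%N *: ebase n t
  else 0.

Definition alpha_std (k : nat) : CC := if k == 2%N then 1 else 0.

Definition TP_isomorphic (n : nat) (alpha beta : nat -> CC) : Prop :=
  exists phi : 'rV[CC]_n -> 'rV[CC]_n,
    [/\ linear phi, bijective phi,
        forall u v, phi (bilin (@dotE n) u v) = bilin (@dotE n) (phi u) (phi v)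
      & forall u v, phi (bilin (@brE n alpha) u v) = bilin (@brE n beta) (phi u) (phi v)].

From HB Require Import structures.
From mathcomp Require Import all_boot all_order all_algebra complex Rstruct.
From mathcomp Require Import ring zify.
Set Implicit Arguments. Unset Strict Implicit. Unset Printing Implicit Defensive.
Import Order.TTheory GRing.Theory Num.Theory.
Local Open Scope ring_scope.

(* Identify mu_0^n with X C[X] / (X^(n+1)), e_k standing for X^k.  There the
   bracket of TP(alpha_2, ..., alpha_n) is [p, q] = A (p q' - p' q) with
   A = sum_k alpha_(k+2) X^k.  Substituting X := psi with psi(0) = 0 and
   psi'(0) <> 0 is an automorphism of the truncated polynomial algebra, and by
   the chain rule it carries the bracket of weight 1 to the bracket of weight A
   as soon as A psi' = 1 mod X^n: the bracket takes values in X C[X], which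
   supplies the missing power of X.  As A(0) = alpha_2 <> 0, a primitive psi of
   a truncated inverse of A does the job. *)

Section PolyModXn.
Variable R : comNzRingType.
Implicit Types (A p q r psi : {poly R}) (m : nat).

Definition eqmodXn m p q := exists r, p = q + r * 'X^m.

Lemma eqmodXn_trans m p q r : eqmodXn m p q -> eqmodXn m q r -> eqmodXn m p r.
Proof. by case=> s -> [t ->]; exists (t + s); rewrite mulrDl addrA. Qed.

Lemma eqmodXnB m p q p1 q1 :
  eqmodXn m p p1 -> eqmodXn m q q1 -> eqmodXn m (p - q) (p1 - q1).
Proof. by case=> r -> [s ->]; exists (r - s); ring. Qed.

Lemma eqmodXnMl m r p q : eqmodXn m p q -> eqmodXn m (r * p) (r * q).
Proof. by case=> s ->; exists (r * s); ring. Qed.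

Lemma eqmodXnM m p q p1 q1 :
  eqmodXn m p p1 -> eqmodXn m q q1 -> eqmodXn m (p * q) (p1 * q1).
Proof.
move=> /(eqmodXnMl q) pp1 /(eqmodXnMl p1) qq1.
by apply: eqmodXn_trans qq1; rewrite mulrC [p1 * q]mulrC.
Qed.

Lemma poly_coef0_drop p : p = (p`_0)%:P + drop_poly 1 p * 'X.
Proof.
rewrite -[X in _ * X]expr1 -[LHS](poly_take_drop 1); congr (_ + _).
by apply/polyP => -[|k]; rewrite coef_take_poly coefC.
Qed.

Lemma mulX_drop1 p : p`_0 = 0 -> p = drop_poly 1 p * 'X.
Proof. by move=> p0; rewrite [LHS]poly_coef0_drop p0 add0r. Qed.

Lemma eqmodXnMl_coef0 m r p q : r`_0 = 0 -> eqmodXn m p q -> eqmodXn m.+1 (r * p) (r * q).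
Proof.
by move=> /mulX_drop1 -> [s ->]; exists (drop_poly 1 r * s); rewrite exprS; ring.
Qed.

Lemma eqmodXn_deriv m p q : eqmodXn m.+1 p q -> eqmodXn m p^`() q^`().
Proof.
case=> r ->; exists (r^`() * 'X + r *+ m.+1).
by rewrite derivD derivM derivXn exprS /=; ring.
Qed.

Lemma comp_polyXn k psi : 'X^k \Po psi = psi ^+ k.
Proof.
by elim: k => [|k IH]; rewrite ?comp_polyC // !exprS comp_polyM comp_polyX IH.
Qed.

Lemma eqmodXn_comp m p q psi :
  psi`_0 = 0 -> eqmodXn m p q -> eqmodXn m (p \Po psi) (q \Po psi).
Proof.
move=> /mulX_drop1 psiX [r ->]; exists ((r \Po psi) * drop_poly 1 psi ^+ m).
by rewrite comp_polyD comp_polyM comp_polyXn {3}psiX exprMn; ring.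
Qed.

Lemma eqmodXn_coef m p q i : eqmodXn m p q -> (i < m)%N -> p`_i = q`_i.
Proof. by case=> r -> im; rewrite coefD coefMXn im addr0. Qed.

Lemma coef0_comp p psi : psi`_0 = 0 -> (p \Po psi)`_0 = p`_0.
Proof. by move=> psi0; rewrite -!horner_coef0 horner_comp [psi.[0]]horner_coef0 psi0. Qed.

Lemma coef_comp_lowest m p psi : psi`_0 = 0 -> (forall j, (j < m)%N -> p`_j = 0) ->
  (p \Po psi)`_m = p`_m * psi`_1 ^+ m.
Proof.
move=> psi0 p_low.
have pXm : p = drop_poly m p * 'X^m.
  rewrite -[LHS](poly_take_drop m) addrC; suff -> : take_poly m p = 0 by rewrite addr0.
  by apply/polyP => k; rewrite coef_take_poly coef0; case: ifP => // /p_low.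
have psi1 : psi`_1 = (drop_poly 1 psi)`_0 by rewrite coef_drop_poly.
rewrite {1}pXm comp_polyM comp_polyXn [in psi ^+ m](mulX_drop1 psi0) exprMn mulrA.
rewrite coefMXn ltnn subnn.
rewrite coef0M coef0_comp // coef_drop_poly add0n psi1.
by rewrite -!horner_coef0 horner_exp.
Qed.

Definition wbracket A p q := (p * q^`() - p^`() * q) * A.

Lemma wbracket_comp A p q psi :
  wbracket A (p \Po psi) (q \Po psi) = (wbracket 1 p q \Po psi) * (A * psi^`()).
Proof. by rewrite /wbracket !deriv_comp comp_polyM comp_polyB !comp_polyM; ring. Qed.

Lemma coef0_wbracket A p q : p`_0 = 0 -> q`_0 = 0 -> (wbracket A p q)`_0 = 0.
Proof. by move=> p0 q0; rewrite coef0M coefB !coef0M p0 q0 !(mul0r, mulr0, subr0). Qed.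

Lemma eqmodXn_wbracket m A p q p1 q1 : p1`_0 = 0 -> q1`_0 = 0 ->
  eqmodXn m.+1 p p1 -> eqmodXn m.+1 q q1 -> eqmodXn m.+1 (wbracket A p q) (wbracket A p1 q1).
Proof.
move=> p10 q10 pp1 qq1; rewrite /wbracket [_ * A]mulrC [X in eqmodXn _ _ X]mulrC.
apply: eqmodXnMl; apply: eqmodXnB.
  apply: eqmodXn_trans (eqmodXnMl_coef0 p10 (eqmodXn_deriv qq1)).
  by rewrite ![_ * q^`()]mulrC; apply: eqmodXnMl.
apply: eqmodXn_trans (eqmodXnMl p^`() qq1) _.
by rewrite mulrC [p1^`() * _]mulrC; apply: eqmodXnMl_coef0 q10 (eqmodXn_deriv pp1).
Qed.

Lemma wbracket_Xn A i j :
  wbracket A 'X^(i.+1) 'X^(j.+1) = ((j.+1)%:R - (i.+1)%:R) *: ('X^((i + j).+1) * A).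
Proof.
rewrite /wbracket !derivXn /= -(mulr_natr 'X^j) -(mulr_natr 'X^i) -mul_polyC.
by rewrite rmorphB /= !polyC_natr !exprS exprD; ring.
Qed.

End PolyModXn.

Lemma eqmodXn_inv (F : fieldType) (A : {poly F}) m :
  A`_0 != 0 -> exists B, eqmodXn m (A * B) 1.
Proof.
move=> A0; set c := (A`_0)^-1%:P; set y := - (c * drop_poly 1 A) * 'X.
have cA0 : (A`_0)%:P * c = 1 by rewrite -polyCM mulfV.
have -> : A = (A`_0)%:P * (1 - y).
  by rewrite /y mulrBr mulr1 mulNr mulrN opprK !mulrA cA0 mul1r -poly_coef0_drop.
exists (c * \sum_(i < m) y ^+ i), (- (- (c * drop_poly 1 A)) ^+ m).
have -> : (A`_0)%:P * (1 - y) * (c * \sum_(i < m) y ^+ i)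
          = ((A`_0)%:P * c) * - ((y - 1) * \sum_(i < m) y ^+ i) by ring.
by rewrite cA0 mul1r -subrX1 {1}/y exprMn; ring.
Qed.

Section Antiderivative.
Variable F : numFieldType.
Implicit Types B : {poly F}.

Definition antideriv B : {poly F} :=
  \poly_(i < (size B).+1) (if i is k.+1 then B`_k / (k.+1)%:R else 0).

Lemma deriv_antideriv B : (antideriv B)^`() = B.
Proof.
apply/polyP => k; rewrite coef_deriv coef_poly ltnS.
case: ltnP => [_ | kB]; last by rewrite mul0rn nth_default.
by rewrite -[LHS]mulr_natr divfK ?pnatr_eq0.
Qed.

Lemma coef0_antideriv B : (antideriv B)`_0 = 0.
Proof. by rewrite coef_poly. Qed.

Lemma coef1_antideriv B : (antideriv B)`_1 = B`_0.
Proof.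
by rewrite coef_poly ltnS divr1; case: ltnP => // sB; rewrite nth_default.
Qed.

End Antiderivative.

Lemma exists_normalizing_subst (F : numFieldType) (A : {poly F}) m :
  (0 < m)%N -> A`_0 != 0 ->
  exists psi : {poly F}, [/\ psi`_0 = 0, psi`_1 != 0 & eqmodXn m (A * psi^`()) 1].
Proof.
move=> m0 A0; have [B AB1] := eqmodXn_inv m A0.
exists (antideriv B); rewrite coef0_antideriv coef1_antideriv deriv_antideriv.
split=> //; apply: contraTneq A0 => B0.
have := eqmodXn_coef AB1 m0; rewrite coef0M B0 mulr0 coef1 /=.
by move/eqP; rewrite eq_sym oner_eq0.
Qed.

Lemma linear_rV_bijective (F : fieldType) m (f : {linear 'rV[F]_m -> 'rV[F]_m}) :
  (forall u, f u = 0 -> u = 0) -> bijective f.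
Proof.
move=> f_inj; have fM u : u *m lin1_mx f = f u by rewrite mul_rV_lin1.
have Mu : lin1_mx f \in unitmx.
  rewrite -row_free_unit -kermx_eq0; apply/eqP/row_matrixP => i.
  by rewrite row0; apply: f_inj; rewrite -fM -row_mul mulmx_ker row0.
by exists (mulmxr (invmx (lin1_mx f))) => u /=; rewrite -fM ?mulmxK ?mulmxKV.
Qed.

Lemma TP_isomorphic_sym n alpha beta :
  TP_isomorphic n alpha beta -> TP_isomorphic n beta alpha.
Proof.
case=> phi [phi_lin [psi phiK psiK] phi_dot phi_br].
exists psi; split; first by move=> a u v; apply: (can_inj phiK); rewrite phi_lin !psiK.
- by exists phi.
- by move=> u v; apply: (can_inj phiK); rewrite phi_dot !psiK.
- by move=> u v; apply: (can_inj phiK); rewrite phi_br !psiK.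
Qed.

Lemma sum_nat_delta (R : nzSemiRingType) m M c (F : nat -> R) :
  \sum_(m <= t < M) F t * (c == t)%:R = if (m <= c < M)%N then F c else 0.
Proof.
elim: M => [|M IH]; first by rewrite big_geq // ltn0 andbF.
case: (leqP m M) => hm; last by rewrite big_geq //; case: ifP => //; lia.
rewrite big_nat_recr //= IH; have [->|ne] := eqVneq c M.
  by rewrite ltnn andbF mulr1 add0r hm ltnSn.
by rewrite mulr0 addr0; congr (if _ then _ else _); move: ne; lia.
Qed.

Section RowModel.
Variable n : nat.
Implicit Types (u v : 'rV[CC]_n) (p q psi : {poly CC}).

Definition poly_of_rV u : {poly CC} := \sum_(i < n) u 0 i *: 'X^(i.+1).
Definition rV_of_poly p : 'rV[CC]_n := \row_(j < n) p`_j.+1.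

Lemma rV_of_polyD p q : rV_of_poly (p + q) = rV_of_poly p + rV_of_poly q.
Proof. by apply/rowP => j; rewrite !mxE coefD. Qed.

Lemma rV_of_polyZ c p : rV_of_poly (c *: p) = c *: rV_of_poly p.
Proof. by apply/rowP => j; rewrite !mxE coefZ. Qed.

Lemma rV_of_poly_sum I (r : seq I) (F : I -> {poly CC}) :
  rV_of_poly (\sum_(i <- r) F i) = \sum_(i <- r) rV_of_poly (F i).
Proof. by apply: (big_morph _ rV_of_polyD); apply/rowP => j; rewrite !mxE coef0. Qed.

Lemma rV_of_polyXn k : rV_of_poly 'X^k = ebase n k.
Proof. by apply/rowP => j; rewrite !mxE coefXn. Qed.

Lemma eqmodXn_rV_of_poly p q : eqmodXn n.+1 p q -> rV_of_poly p = rV_of_poly q.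
Proof.
case=> r ->; apply/rowP => j.
by rewrite !mxE coefD coefMXn ltnS ltn_ord addr0.
Qed.

Lemma poly_of_rVD u v : poly_of_rV (u + v) = poly_of_rV u + poly_of_rV v.
Proof. by rewrite -big_split; apply: eq_bigr => i _; rewrite mxE scalerDl. Qed.

Lemma poly_of_rVZ c u : poly_of_rV (c *: u) = c *: poly_of_rV u.
Proof. by rewrite scaler_sumr; apply: eq_bigr => i _; rewrite mxE scalerA. Qed.

Lemma coef_poly_of_rV u k : (poly_of_rV u)`_k = \sum_(i < n) u 0 i * (k == i.+1)%:R.
Proof. by rewrite coef_sum; apply: eq_bigr => i _; rewrite coefZ coefXn. Qed.

Lemma coef0_poly_of_rV u : (poly_of_rV u)`_0 = 0.
Proof. by rewrite coef_poly_of_rV big1 // => i _; rewrite mulr0. Qed.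

Lemma coef_poly_of_rVS u (i : 'I_n) : (poly_of_rV u)`_i.+1 = u 0 i.
Proof.
rewrite coef_poly_of_rV (bigD1 i) //= eqxx mulr1 big1 ?addr0 // => j ji.
by rewrite eqSS -[_ == _]/(i == j :> 'I_n) eq_sym (negPf ji) mulr0.
Qed.

Lemma coef_poly_of_rV_gt u k : (n < k)%N -> (poly_of_rV u)`_k = 0.
Proof.
move=> nk; rewrite coef_poly_of_rV big1 // => i _.
by case: eqP => [ki|]; rewrite ?mulr0 //; move: (ltn_ord i); lia.
Qed.

Lemma eqmodXn_poly_of_rV p : p`_0 = 0 -> eqmodXn n.+1 (poly_of_rV (rV_of_poly p)) p.
Proof.
move=> p0; exists (- drop_poly n.+1 p).
rewrite mulNr -[X in _ = X - _](poly_take_drop n.+1) addrK.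
apply/polyP => -[|k]; rewrite coef_take_poly ?coef0_poly_of_rV ?p0 //.
case: (ltnP k n) => kn; first by rewrite (coef_poly_of_rVS _ (Ordinal kn)) mxE /= ltnS kn.
by rewrite coef_poly_of_rV_gt // ltnNge ltnS kn.
Qed.

Lemma bilin_polyE (f : nat -> nat -> 'rV[CC]_n) (G : {poly CC} -> {poly CC} -> {poly CC}) :
  (forall q, {morph G^~ q : p1 p2 / p1 + p2}) -> (forall c p q, G (c *: p) q = c *: G p q) ->
  (forall p, {morph G p : q1 q2 / q1 + q2}) -> (forall c p q, G p (c *: q) = c *: G p q) ->
  (forall i j : 'I_n, f i.+1 j.+1 = rV_of_poly (G 'X^(i.+1) 'X^(j.+1))) ->
  forall u v, bilin f u v = rV_of_poly (G (poly_of_rV u) (poly_of_rV v)).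
Proof.
move=> GDl GZl GDr GZr Gf u v.
have G0l q : G 0 q = 0 by have := GZl 0 0 q; rewrite !scale0r.
have G0r p : G p 0 = 0 by have := GZr 0 p 0; rewrite !scale0r.
rewrite /poly_of_rV (big_morph _ (GDl _) (G0l _)) rV_of_poly_sum.
apply: eq_bigr => i _; rewrite GZl (big_morph _ (GDr _) (G0r _)) scaler_sumr rV_of_poly_sum.
by apply: eq_bigr => j _; rewrite GZr scalerA rV_of_polyZ Gf.
Qed.

Lemma bilin_dotE u v : bilin (@dotE n) u v = rV_of_poly (poly_of_rV u * poly_of_rV v).
Proof.
apply: bilin_polyE => [q p1 p2|c p q|p q1 q2|c p q|i j].
- exact: mulrDl.
- by rewrite scalerAl.
- exact: mulrDr.
- by rewrite scalerAr.
rewrite /dotE -exprD -rV_of_polyXn; case: ifP => [//|/negbT nij].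
apply/rowP => k; rewrite !mxE coefXn; case: eqP => [ki|//].
by move: (ltn_ord k) nij; lia.
Qed.

Definition alpha_poly (alpha : nat -> CC) : {poly CC} := \poly_(k < n) alpha k.+2.

Lemma coef0_alpha_poly alpha : (0 < n)%N -> (alpha_poly alpha)`_0 = alpha 2%N.
Proof. by move=> n0; rewrite coef_poly n0. Qed.

Lemma alpha_poly_std : (0 < n)%N -> alpha_poly alpha_std = 1.
Proof.
by move=> n0; apply/polyP => -[|k]; rewrite coef_poly coef1 /alpha_std ?n0 //; case: ifP.
Qed.

Lemma brE_Xn alpha (i j : 'I_n) :
  brE n alpha i.+1 j.+1 = rV_of_poly (wbracket (alpha_poly alpha) 'X^(i.+1) 'X^(j.+1)).
Proof.
rewrite wbracket_Xn; apply/rowP => k; rewrite [RHS]mxE coefZ coefXnM coef_poly.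
have kn := ltn_ord k; have i_n := ltn_ord i; have jn := ltn_ord j.
rewrite /brE; case: ifP => hc; rewrite mxE.
  rewrite summxE; under eq_bigr => t _ do rewrite !mxE.
  rewrite sum_nat_delta; congr (_ * _).
  case: (ltnP k.+1 (i + j).+1) => h1.
    by have -> : ((i.+1 + j.+1).-1 <= k.+1 < n.+1)%N = false by apply/negP; lia.
  have -> : ((i.+1 + j.+1).-1 <= k.+1 < n.+1)%N = true by apply/idP; lia.
  have -> : (k.+1 - (i + j).+1 < n)%N = true by apply/idP; move: hc; lia.
  by congr alpha; lia.
case: (ltnP k.+1 (i + j).+1) => h1; first by rewrite mulr0.
have [-> ->] : (i = 0 :> nat) /\ (j = 0 :> nat) by move: hc; lia.
by rewrite subrr mul0r.
Qed.

Lemma bilin_brE alpha u v :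
  bilin (@brE n alpha) u v = rV_of_poly (wbracket (alpha_poly alpha) (poly_of_rV u) (poly_of_rV v)).
Proof.
apply: bilin_polyE => [q p1 p2|c p q|p q1 q2|c p q|]; last exact: brE_Xn;
  by rewrite /wbracket ?derivD ?derivZ -?mul_polyC; ring.
Qed.

Section Substitution.
Variable psi : {poly CC}.
Hypothesis psi0 : psi`_0 = 0.

Definition comp_rV u : 'rV[CC]_n := rV_of_poly (poly_of_rV u \Po psi).

Lemma comp_rV_is_linear : linear comp_rV.
Proof.
move=> c u v; rewrite /comp_rV poly_of_rVD poly_of_rVZ.
by rewrite comp_polyD comp_polyZ rV_of_polyD rV_of_polyZ.
Qed.

Lemma comp_rV_rV_of_poly p : p`_0 = 0 -> comp_rV (rV_of_poly p) = rV_of_poly (p \Po psi).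
Proof. by move=> p0; apply/eqmodXn_rV_of_poly/eqmodXn_comp/eqmodXn_poly_of_rV. Qed.

Lemma coef0_poly_of_rV_comp u : (poly_of_rV u \Po psi)`_0 = 0.
Proof. by rewrite coef0_comp // coef0_poly_of_rV. Qed.

Lemma eqmodXn_poly_of_comp_rV u :
  eqmodXn n.+1 (poly_of_rV (comp_rV u)) (poly_of_rV u \Po psi).
Proof. exact: eqmodXn_poly_of_rV (coef0_poly_of_rV_comp u). Qed.

Lemma comp_rV_dot u v :
  comp_rV (bilin (@dotE n) u v) = bilin (@dotE n) (comp_rV u) (comp_rV v).
Proof.
rewrite !bilin_dotE comp_rV_rV_of_poly; last by rewrite coef0M coef0_poly_of_rV mul0r.
by rewrite comp_polyM; apply/esym/eqmodXn_rV_of_poly/eqmodXnM; apply: eqmodXn_poly_of_comp_rV.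
Qed.

Lemma comp_rV_br alpha : (0 < n)%N -> eqmodXn n (alpha_poly alpha * psi^`()) 1 ->
  forall u v,
  comp_rV (bilin (@brE n alpha_std) u v) = bilin (@brE n alpha) (comp_rV u) (comp_rV v).
Proof.
move=> n0 Apsi1 u v; rewrite !bilin_brE alpha_poly_std // comp_rV_rV_of_poly; last first.
  by apply: coef0_wbracket; apply: coef0_poly_of_rV.
apply/esym/eqmodXn_rV_of_poly.
have := eqmodXn_wbracket (alpha_poly alpha) (coef0_poly_of_rV_comp u) (coef0_poly_of_rV_comp v)
  (eqmodXn_poly_of_comp_rV u) (eqmodXn_poly_of_comp_rV v).
move/eqmodXn_trans; apply; rewrite wbracket_comp -[X in eqmodXn _ _ X]mulr1.
apply: eqmodXnMl_coef0 Apsi1.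
by rewrite coef0_comp // coef0_wbracket // coef0_poly_of_rV.
Qed.

Lemma comp_rV_eq0 u : psi`_1 != 0 -> comp_rV u = 0 -> u = 0.
Proof.
move=> psi1 u0; suff low m : (m <= n)%N -> forall j, (j <= m)%N -> (poly_of_rV u)`_j = 0.
  by apply/rowP => i; rewrite -coef_poly_of_rVS (low n) ?mxE.
elim: m => [_ j|m IH mn j]; first by rewrite leqn0 => /eqP->; rewrite coef0_poly_of_rV.
rewrite leq_eqVlt ltnS => /predU1P[->|]; last by apply: IH; apply: ltnW.
have := congr1 (fun w : 'rV[CC]_n => w 0 (Ordinal mn)) u0.
rewrite !mxE /= (coef_comp_lowest psi0) => [|k km]; last by apply: IH; [apply: ltnW|].
by move/eqP; rewrite mulf_eq0 expf_eq0 (negPf psi1) andbF orbF => /eqP.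
Qed.

End Substitution.

End RowModel.

HB.instance Definition _ n psi := GRing.isLinear.Build CC 'rV[CC]_n 'rV[CC]_n *:%R
  (@comp_rV n psi) (@comp_rV_is_linear n psi).

Theorem mainTheorem7 (n : nat) (alpha : nat -> CC) :
  (2 <= n)%N -> alpha 2%N != 0 -> TP_isomorphic n alpha alpha_std.
Proof.
move=> n2 alpha2; have n0 : (0 < n)%N by apply: leq_trans n2.
have A0 : (alpha_poly n alpha)`_0 != 0 by rewrite coef0_alpha_poly.
have [psi [psi0 psi1 Apsi1]] := exists_normalizing_subst n0 A0.
apply: TP_isomorphic_sym; exists (comp_rV psi); split.
- exact: comp_rV_is_linear.
- by apply: linear_rV_bijective => u; apply: comp_rV_eq0.
- exact: comp_rV_dot.
- exact: comp_rV_br.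
Qed.
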